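(* Let $R$ be a D-regularly nil clean ring. Then its center $C(R)$ is again a D-regularly nil clean ring.
   Context: All rings are associative with identity $1\neq 0$. $C(R)$ denotes the center of $R$, $Id(R)$ the set of idempotents, $Nil(R)$ the set of nilpotent elements. A ring $R$ is called D-regularly nil clean if for each $a\in R$ there exists an idempotent $e\in aRa\cap Id(R)$ such that $a(1-e)\in Nil(R)$. *)

From HB Require Import structures.
From mathcomp Require Import all_boot all_order all_algebra.
From Stdlib Require Import ClassicalEpsilon.
Set Implicit Arguments.
Unset Strict Implicit.
Unset Printing Implicit Defensive.
Import GRing.Theory.
Local Open Scope ring_scope.

Definition idempotent (R : nzRingType) (e : R) : Prop := e * e = e.

Definition nilpotent (R : nzRingType) (x : R) : Prop := exists n : nat, x ^+ n = 0.

Definition in_aRa (R : nzRingType) (a e : R) : Prop := exists r : R, e = a * r * a.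

Definition D_regularly_nil_clean (R : nzRingType) : Prop :=
  forall a : R, exists e : R,
    [/\ in_aRa a e, idempotent e & nilpotent (a * (1 - e))].

Definition central_prop (R : nzRingType) (x : R) : Prop := forall y : R, x * y = y * x.

Definition central (R : nzRingType) : {pred R} :=
  fun x => if excluded_middle_informative (central_prop x) then true else false.

Lemma centralP (R : nzRingType) (x : R) : reflect (central_prop x) (x \in @central R).
Proof.
rewrite unfold_in /central; case: excluded_middle_informative => H.
- by apply: ReflectT.
- by apply: ReflectF.
Qed.

Lemma central_subring_closed (R : nzRingType) : subring_closed (@central R).
Proof.
split.
- by apply/centralP => y; rewrite mul1r mulr1.
- move=> x y /centralP Hx /centralP Hy; apply/centralP => z.
  by rewrite mulrBl mulrBr Hx Hy.
- move=> x y /centralP Hx /centralP Hy; apply/centralP => z.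
  by rewrite -mulrA Hy mulrA Hx mulrA.
Qed.

HB.instance Definition _ (R : nzRingType) :=
  GRing.isSubringClosed.Build R (@central R) (central_subring_closed R).

Record center (R : nzRingType) := Center { center_val :> R; _ : center_val \in @central R }.

HB.instance Definition _ (R : nzRingType) := [isSub for @center_val R].
HB.instance Definition _ (R : nzRingType) := [Choice of center R by <:].
HB.instance Definition _ (R : nzRingType) := [SubChoice_isSubNzRing of center R by <:].

(** An element [e] that is a multiple [b t] of a central element [b] with
    [b (1 - e) = 0] is central, since then [e y (1 - e) = 0 = (1 - e) y e].
    For central [a] with [e = a r a] idempotent and [(a (1 - e))^n = 0],
    [b = a^n] is such an element: [b (1 - e) = (a (1 - e))^n = 0] and
    [e = e^n = (a^2 r)^n = a^n (a^n r^n)].  Once [e] is central,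
    [s = e r e] is an inverse of [a^2] relative to [e], hence central, and
    [e = a s a]; so [e] and [s] witness D-regular nil cleanness inside C(R). *)

From mathcomp Require Import all_boot all_order all_algebra.
Set Implicit Arguments.
Unset Strict Implicit.
Unset Printing Implicit Defensive.

Import GRing.Theory.
Local Open Scope ring_scope.

Section CentralElements.

Variable R : nzRingType.
Implicit Types a b c e r s t : R.

Lemma idempotent_exprS e n : idempotent e -> e ^+ n.+1 = e.
Proof. by move=> ee; elim: n => [|n IHn]; rewrite ?expr1 // exprS IHn ee. Qed.

Lemma idempotent_compl e : idempotent e -> idempotent (1 - e).
Proof. by move=> ee; rewrite /idempotent mulrBl mul1r mulrBr mulr1 ee subrr subr0. Qed.

Lemma central_exprn a n : central_prop a -> central_prop (a ^+ n).
Proof. by move=> ca y; apply/commr_sym/commrX/commr_sym. Qed.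

Lemma central_mul_sandwich a r : central_prop a -> a * r * a = a * a * r.
Proof. by move=> ca; rewrite -mulrA -ca mulrA. Qed.

Lemma central_of_central_factor b e t :
  central_prop b -> b * (1 - e) = 0 -> e = b * t -> central_prop e.
Proof.
move=> cb be0 ebt y.
have eye_r : e * y * (1 - e) = 0.
  by rewrite {1}ebt -!mulrA cb -!mulrA -[(1 - e) * b]cb be0 !mulr0.
have eye_l : (1 - e) * y * e = 0.
  by rewrite {2}ebt mulrA -(mulrA _ y) -cb !mulrA -[(1 - e) * b]cb be0 !mul0r.
have -> : e * y = e * y * e.
  by apply/eqP; rewrite -subr_eq0 -{1}(mulr1 (e * y)) -mulrBr eye_r.
by apply/esym/eqP; rewrite -subr_eq0 -{1}(mul1r y) -!mulrBl eye_l.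
Qed.

Lemma central_of_relative_inverse c e s :
  central_prop c -> central_prop e -> s * e = s -> s * c = e -> c * s = e ->
  central_prop s.
Proof.
move=> cc ce se sc cs y.
by rewrite -{1}se -mulrA ce -cs (mulrA y) -cc !mulrA sc ce -mulrA ce se.
Qed.

Lemma central_idempotent_of_nilpotent a r e :
  central_prop a -> e = a * r * a -> idempotent e -> nilpotent (a * (1 - e)) ->
  central_prop e.
Proof.
move=> ca ear ee [[|n] hn].
  by move/eqP: hn; rewrite expr0 oner_eq0.
apply: (@central_of_central_factor (a ^+ n.+1) _ (a ^+ n.+1 * r ^+ n.+1)).
- exact: central_exprn.
- by rewrite -(idempotent_exprS n (idempotent_compl ee)) -exprMn_comm.
- have e_a2r : e = a * a * r by rewrite ear -mulrA -ca mulrA.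
  have comm_a2r : GRing.comm (a * a) r by rewrite /GRing.comm -mulrA ca ca -mulrA.
  by rewrite -{1}(idempotent_exprS n ee) {1}e_a2r !exprMn_comm ?mulrA.
Qed.

Lemma central_inner_witness a r e :
  central_prop a -> central_prop e -> e = a * r * a -> idempotent e ->
  central_prop (e * r * e) /\ e = a * (e * r * e) * a.
Proof.
move=> ca ce ear ee; set s := e * r * e.
have ca2 : central_prop (a * a) := central_exprn 2 ca.
have e_a2r : e = a * a * r by rewrite ear (central_mul_sandwich _ ca).
have se : s * e = s by rewrite /s -mulrA ee.
have a2s : a * a * s = e by rewrite /s !mulrA ca2 -(mulrA e) -e_a2r !ee.
have sa2 : s * (a * a) = e by rewrite -ca2.
split; first exact: central_of_relative_inverse ca2 ce se sa2 a2s.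
by rewrite (central_mul_sandwich _ ca) a2s.
Qed.

End CentralElements.

Theorem proposition2p2 (R : nzRingType) :
  D_regularly_nil_clean R -> D_regularly_nil_clean (center R).
Proof.
move=> dr a.
have ca : central_prop (val a) by apply/centralP; exact: valP.
have [e [[r ear] ee nil_e]] := dr (val a).
have ce := central_idempotent_of_nilpotent ca ear ee nil_e.
have [cs eas] := central_inner_witness ca ce ear ee.
exists (Sub e (introT (centralP e) ce) : center R); split.
- exists (Sub (e * r * e) (introT (centralP _) cs) : center R).
  by apply: val_inj; rewrite !rmorphM.
- by apply: val_inj; rewrite rmorphM.
- have [n hn] := nil_e; exists n; apply: val_inj.
  by rewrite rmorphXn rmorphM rmorphB rmorph1 rmorph0.
Qed.
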